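(* Let $r$ be a positive integer, let $G$ be a finite simple graph, and let $S$ be an $r$-net of $G$. Let $H$ be the induced subgraph of $G$ obtained by deleting the vertices of $S$, and suppose $H$ has at least one vertex. Then $\lambda_1(H)^{2r} \le \lambda_1(G)^{2r} - 1$.
   Context: An $r$-net in a graph $G$ is a subset $S$ of the vertex set of $G$ such that every vertex of $G$ lies within (graph) distance at most $r$ of some vertex of $S$. For a graph $F$, $\lambda_1(F)$ denotes the largest eigenvalue of the adjacency matrix of $F$. *)

From HB Require Import structures.
From mathcomp Require Import all_boot all_order all_algebra.
From mathcomp Require Import reals.
Set Implicit Arguments. Unset Strict Implicit. Unset Printing Implicit Defensive.
Import Order.TTheory GRing.Theory Num.Theory.
Local Open Scope ring_scope.

Definition simple_graph (T : finType) (e : rel T) : Prop :=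
  symmetric e /\ irreflexive e.

Definition within_dist (T : finType) (e : rel T) (r : nat) (u v : T) : Prop :=
  exists p : seq T, [/\ path e u p, last u p = v & (size p <= r)%N].

Definition is_rnet (T : finType) (e : rel T) (r : nat) (S : {set T}) : Prop :=
  forall v : T, exists2 s, s \in S & within_dist e r s v.

(* adjacency matrix of the subgraph induced on A (vertices indexed by enum A) *)
Definition adj_mx (R : realType) (T : finType) (e : rel T) (A : {set T})
  : 'M[R]_#|A| :=
  \matrix_(i, j) (e (enum_val i) (enum_val j))%:R.

Definition is_lambda1 (R : realType) (n : nat) (M : 'M[R]_n) (l : R) : Prop :=
  eigenvalue M l /\ forall a : R, eigenvalue M a -> a <= l.

(* Let y be an eigenvector of A_H for lambda_1(H) and let x be |y|, extended by zero to
   all of G.  Entrywise (A_G^2r)_uv >= (A_H^2r)_uv, since both count walks and those of H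
   are walks of G; and for u outside S the r-net yields a closed walk of length 2r from u
   through S, so the diagonal entries gain at least 1.  Hence
   x A_G^2r x >= |y| A_H^2r |y| + |y|^2 >= (lambda_1(H)^2r + 1) |y|^2.
   On the other hand A_G is symmetric with nonnegative entries, so every eigenvalue has
   modulus at most lambda_1(G), and the spectral theorem (applied to the complexified
   matrix) gives x A_G^2r x <= lambda_1(G)^2r |x|^2. *)

From HB Require Import structures.
From mathcomp Require Import all_boot all_order all_algebra.
From mathcomp Require Import reals complex zify.
Set Implicit Arguments. Unset Strict Implicit. Unset Printing Implicit Defensive.
Import Order.TTheory GRing.Theory Num.Theory.

Lemma leq_sum_sub (I : finType) (P Q : pred I) (F G : I -> nat) :
  (forall i, P i -> Q i) -> (forall i, F i <= G i) ->
  \sum_(i | P i) F i <= \sum_(i | Q i) G i.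
Proof.
move=> sPQ leFG; apply: (@leq_trans (\sum_(i | P i) G i)).
  by apply: leq_sum => i _; apply: leFG.
exact: (sub_le_big leqnn (fun m n => leq_addr n m) G sPQ).
Qed.

Section Walks.
Variables (T : finType) (e : rel T).

(* The number of walks u = x_0, x_1, ..., x_k = v with x_1, ..., x_k in A; the start u
   need not lie in A. *)
Fixpoint nwalks (A : {set T}) (k : nat) (u v : T) : nat :=
  if k is k'.+1 then \sum_(t in A | e u t) nwalks A k' t v else u == v.

Lemma subset_nwalks (A B : {set T}) k u v :
  A \subset B -> nwalks A k u v <= nwalks B k u v.
Proof.
move=> sAB; elim: k u => [|k IHk] u //=.
by apply: leq_sum_sub => // t /andP[/(subsetP sAB) -> ->].
Qed.

Lemma path_nwalks_gt0 p u : path e u p -> 0 < nwalks setT (size p) u (last u p).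
Proof.
elim: p u => [|t p IHp] u /=; first by rewrite eqxx.
by case/andP=> eut /IHp; rewrite (bigD1 t) ?inE //=; apply: ltn_addr.
Qed.

Lemma nwalks_lt_setT (A : {set T}) p u : path e u p -> has (fun t => t \notin A) p ->
  nwalks A (size p) u (last u p) < nwalks setT (size p) u (last u p).
Proof.
elim: p u => [|t p IHp] u //= /andP[eut pt] outA.
rewrite [X in _ < X](bigD1 t) ?inE //=.
have le_nw t' : nwalks A (size p) t' (last t p) <= nwalks setT (size p) t' (last t p).
  by apply: subset_nwalks; apply: subsetT.
case: (boolP (t \in A)) => tA.
  rewrite (bigD1 t) ?tA //= -addSn leq_add //.
    by apply: IHp; move: outA; rewrite tA.
  apply/leq_sum_sub => [t' /andP[/andP[_ ->] ->]|]; last exact: le_nw.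
  by rewrite inE.
rewrite addnC -addn1 leq_add ?path_nwalks_gt0 //.
apply/leq_sum_sub => [t' /andP[t'A ->]|]; last exact: le_nw.
by rewrite inE andbT; apply: contraNneq tA => <-.
Qed.

End Walks.

Section ClosedWalks.
Variables (T : finType) (e : rel T).
Hypothesis e_sym : symmetric e.

Fixpoint shuttle (a s : T) (j : nat) : seq T :=
  if j is j'.+1 then a :: s :: shuttle a s j' else [::].

Lemma shuttle_path a s j : e s a -> path e s (shuttle a s j).
Proof. by move=> esa; elim: j => //= j ->; rewrite esa e_sym esa. Qed.

Lemma last_shuttle a s j : last s (shuttle a s j) = s.
Proof. by elim: j. Qed.

Lemma size_shuttle a s j : size (shuttle a s j) = (2 * j)%N.
Proof. by elim: j => //= j ->; rewrite mulnS. Qed.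

Lemma rnet_closed_walk r (S : {set T}) u : is_rnet e r S -> u \notin S ->
  exists p, [/\ path e u p, last u p = u, size p = (2 * r)%N & has (mem S) p].
Proof.
(* Go back from u to the net vertex s along the reversed net path, shuttle between s and
   its neighbour a to reach length 2r, then return to u along the net path. *)
move=> rnet uS; have [s sS [[|a q] [sq qu le_q_r]]] := rnet u.
  by rewrite /= in qu; rewrite -qu sS in uS.
have esa : e s a by case/andP: sq.
pose back := rev (belast s (a :: q)).
have back_last : last u back = s by rewrite /back /= rev_cons last_rcons.
exists (back ++ shuttle a s (r - size (a :: q)) ++ a :: q); split.
- rewrite !cat_path back_last shuttle_path // last_shuttle sq !andbT.
  by rewrite /back -[X in path e X]qu rev_path (eq_path (e' := e)) // => x y; rewrite e_sym.
- by rewrite !last_cat back_last last_shuttle.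
- by rewrite !size_cat size_rev size_belast size_shuttle /=; rewrite /= in le_q_r; lia.
- by apply/hasP; exists s; rewrite // !mem_cat mem_rev /= in_cons eqxx.
Qed.

Lemma rnet_nwalks_escape r (S : {set T}) u : is_rnet e r S -> u \in ~: S ->
  (nwalks e (~: S) (2 * r) u u < nwalks e setT (2 * r) u u)%N.
Proof.
rewrite inE => rnet /(rnet_closed_walk rnet)[p [pp pu <- Sp]].
have := @nwalks_lt_setT _ e (~: S) _ _ pp; rewrite pu; apply.
by apply: sub_has Sp => t; rewrite !inE negbK.
Qed.

End ClosedWalks.

Local Open Scope ring_scope.

Lemma ler_psum_sub (R : numDomainType) (I : finType) (P Q : pred I) (F : I -> R) :
  (forall i, P i -> Q i) -> (forall i, Q i -> 0 <= F i) ->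
  \sum_(i | P i) F i <= \sum_(i | Q i) F i.
Proof.
move=> PQ F_ge0; rewrite big_mkcond [X in _ <= X]big_mkcond; apply: ler_sum => i _.
by case: (boolP (P i)) => [/PQ -> //| _]; case: ifP => // /F_ge0.
Qed.

Lemma diag_mxX (R : pzSemiRingType) n (d : 'rV[R]_n) k :
  diag_mx d ^+ k = diag_mx (map_mx (fun x => x ^+ k) d).
Proof.
elim: k => [|k IHk]; apply/matrixP => i j.
  by rewrite expr0 !mxE; case: eqP.
rewrite exprS IHk -mulmxE mul_diag_mx !mxE exprS.
by case: eqP => _; rewrite ?mulr1n ?mulr0n ?mulr0.
Qed.

Lemma eigenvalue_map (F K : fieldType) (f : {rmorphism F -> K}) n
    (B : 'M[F]_n) a :
  eigenvalue (map_mx f B) (f a) = eigenvalue B a.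
Proof. by rewrite !eigenvalue_root_char -map_char_poly fmorph_root. Qed.

Section HermitianForm.
Variable C : numClosedFieldType.
Local Open Scope sesquilinear_scope.

Lemma unitary_conjX n (P D : 'M[C]_n) k : P \is unitarymx ->
  (P^t* *m D *m P) ^+ k = P^t* *m D ^+ k *m P.
Proof.
move=> Pu; elim: k => [|k IHk].
  by rewrite !expr0 mulmx1 -[P^t*]mul1mx mulmxKtV.
by rewrite exprS IHk -mulmxE !mulmxA mulmxtVK // -(mulmxA _ D) mulmxE -exprS.
Qed.

Lemma spectral_diag_eigenvalue n (A : 'M[C]_n) i : A \is normalmx ->
  eigenvalue A (spectral_diag A 0 i).
Proof.
set P := spectralmx A; have Pu : P \is unitarymx := spectral_unitarymx A.
move=> /orthomx_spectralP; rewrite invmx_unitary // => defA.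
apply/eigenvalueP; exists (row i P).
  rewrite -row_mul {1}defA !mulmxA (unitarymxP Pu) mul1mx row_mul.
  by rewrite row_diag_mx -scalemxAl -rowE.
apply/eqP => Pi0; have := congr1 (row i) (unitarymxP Pu).
rewrite row_mul Pi0 mul0mx => /rowP/(_ i).
by rewrite !mxE eqxx => /eqP; rewrite eq_sym oner_eq0.
Qed.

Lemma hermitian_formX_le n (A : 'M[C]_n) k (L : C) : A \is hermsymmx ->
  (forall i, spectral_diag A 0 i ^+ k <= L) ->
  forall z : 'rV_n, (z *m A ^+ k *m z^t*) 0 0 <= L * (z *m z^t*) 0 0.
Proof.
set P := spectralmx A; set d := spectral_diag A.
have Pu : P \is unitarymx := spectral_unitarymx A.
move=> /hermitian_normalmx /orthomx_spectralP; rewrite invmx_unitary // => defA.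
move=> le_dL z; set w := z *m P^t*.
have -> : z *m z^t* = w *m w^t* by rewrite /w trmx_mul map_mxM trmxCK mulmxA mulmxKtV.
rewrite defA unitary_conjX // diag_mxX.
have -> : z *m (P^t* *m diag_mx (map_mx (fun x => x ^+ k) d) *m P) *m z^t* =
          w *m diag_mx (map_mx (fun x => x ^+ k) d) *m w^t*.
  by rewrite /w trmx_mul map_mxM trmxCK !mulmxA.
rewrite !mxE mulr_sumr; apply: ler_sum => j _.
rewrite mul_mx_diag !mxE mulrAC mulrC; apply: ler_wpM2r => //.
exact: mul_conjC_ge0.
Qed.

End HermitianForm.

Section RealQuadraticForm.
Variable R : realDomainType.

Lemma form_sqr n (v : 'rV[R]_n) : (v *m v^T) 0 0 = \sum_j v 0 j ^+ 2.
Proof. by rewrite mxE; apply: eq_bigr => j _; rewrite mxE expr2. Qed.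

Lemma form_ge0 n (v : 'rV[R]_n) : 0 <= (v *m v^T) 0 0.
Proof. by rewrite form_sqr; apply: sumr_ge0 => j _; apply: sqr_ge0. Qed.

Lemma form_gt0 n (v : 'rV[R]_n) : v != 0 -> 0 < (v *m v^T) 0 0.
Proof.
move=> v0; rewrite lt_def form_ge0 andbT; apply: contra v0.
rewrite form_sqr => /eqP/psumr_eq0P v2_0; apply/eqP/rowP => j.
by apply/eqP; rewrite mxE -sqrf_eq0 v2_0 // => i _; apply: sqr_ge0.
Qed.

Lemma form_norm n (v : 'rV[R]_n) :
  (map_mx Num.norm v *m (map_mx Num.norm v)^T) 0 0 = (v *m v^T) 0 0.
Proof.
by rewrite !mxE; apply: eq_bigr => j _; rewrite !mxE -normrM ger0_norm // -expr2 sqr_ge0.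
Qed.

Lemma norm_form_le n (N : 'M[R]_n) (v : 'rV[R]_n) : (forall i j, 0 <= N i j) ->
  `|(v *m N *m v^T) 0 0| <= (map_mx Num.norm v *m N *m (map_mx Num.norm v)^T) 0 0.
Proof.
move=> N_ge0; rewrite !mxE; apply: le_trans (ler_norm_sum _ _ _) _.
apply: ler_sum => j _; rewrite !mxE normrM; apply: ler_wpM2r => //.
apply: le_trans (ler_norm_sum _ _ _) _; apply: ler_sum => i _.
by rewrite !mxE normrM (ger0_norm (N_ge0 i j)).
Qed.

Lemma eigenvectorX n (M : 'M[R]_n) (v : 'rV[R]_n) a k :
  v *m M = a *: v -> v *m M ^+ k = a ^+ k *: v.
Proof.
move=> vM; elim: k => [|k IHk]; first by rewrite !expr0 mulmx1 scale1r.
by rewrite exprSr -mulmxE mulmxA IHk -scalemxAl vM scalerA -exprSr.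
Qed.

Lemma eigenvector_form n (M : 'M[R]_n) (v : 'rV[R]_n) a :
  v *m M = a *: v -> (v *m M *m v^T) 0 0 = a * (v *m v^T) 0 0.
Proof. by move=> vM; rewrite vM -scalemxAl mxE. Qed.

Lemma eigenvector_formX_le n (M : 'M[R]_n) (v : 'rV[R]_n) a k :
  (forall i j, 0 <= (M ^+ k) i j) -> v *m M = a *: v ->
  a ^+ k * (v *m v^T) 0 0 <=
  (map_mx Num.norm v *m M ^+ k *m (map_mx Num.norm v)^T) 0 0.
Proof.
move=> Mk_ge0 /(eigenvectorX k) vMk; apply: le_trans (norm_form_le v Mk_ge0).
by rewrite (eigenvector_form vMk) ler_norm.
Qed.

End RealQuadraticForm.

Section RealSymmetricSpectrum.
Variable R : rcfType.
Local Notation toC := (real_complex R).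
Local Open Scope sesquilinear_scope.

Lemma map_complex_form n (M : 'M[R]_n) (z : 'rV[R]_n) :
  (map_mx toC z *m map_mx toC M *m (map_mx toC z)^t*) 0 0 =
  ((z *m M *m z^T) 0 0)%:C%C.
Proof.
have -> : (map_mx toC z)^t* = map_mx toC z^T.
  by apply/matrixP => i j; rewrite !mxE; apply: conj_Creal; rewrite complex_real.
by rewrite -!map_mxM mxE.
Qed.

Lemma sym_formX_le n (B : 'M[R]_n) k (L : R) : B^T = B ->
  (forall a, eigenvalue B a -> a ^+ k <= L) ->
  forall z : 'rV_n, (z *m B ^+ k *m z^T) 0 0 <= L * (z *m z^T) 0 0.
Proof.
move=> Bsym le_eigL z; pose A := map_mx toC B.
have Aherm : A \is hermsymmx.
  apply: realsym_hermsym; last by apply/mxOverP => i j; rewrite mxE complex_real.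
  by apply/is_hermitianmxP; rewrite expr0 scale1r map_mx_id // map_trmx Bsym.
have := @hermitian_formX_le _ _ A k (L%:C)%C Aherm _ (map_mx toC z).
have := map_complex_form 1%:M z; rewrite map_mx1 !mulmx1 => ->.
rewrite -rmorphXn map_complex_form -rmorphM lecR; apply => i.
have d_real := mxOverP (hermitian_spectral_diag_real Aherm) 0 i.
rewrite -(RRe_real d_real) -rmorphXn lecR; apply: le_eigL.
rewrite -(eigenvalue_map toC) /= RRe_real //.
exact/spectral_diag_eigenvalue/hermitian_normalmx.
Qed.

Lemma nonneg_sym_eigenvalue_norm_le n (B : 'M[R]_n) (l a : R) :
  B^T = B -> (forall i j, 0 <= B i j) -> (forall b, eigenvalue B b -> b <= l) ->
  eigenvalue B a -> `|a| <= l.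
Proof.
move=> Bsym B_ge0 le_eig /eigenvalueP[v vB v0].
set u := map_mx Num.norm v; rewrite -(ler_pM2r (form_gt0 v0)).
apply: (@le_trans _ _ ((u *m B *m u^T) 0 0)).
  by have := norm_form_le v B_ge0; rewrite (eigenvector_form vB) normrM (ger0_norm (form_ge0 v)).
by rewrite -form_norm -[X in _ *m X *m _]expr1; apply: sym_formX_le.
Qed.

Lemma nonneg_sym_formX2_le n (B : 'M[R]_n) (l : R) k :
  B^T = B -> (forall i j, 0 <= B i j) -> (forall a, eigenvalue B a -> a <= l) ->
  forall z : 'rV_n, (z *m B ^+ (2 * k) *m z^T) 0 0 <= l ^+ (2 * k) * (z *m z^T) 0 0.
Proof.
move=> Bsym B_ge0 le_eig; apply: sym_formX_le => // a eig_a.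
have a_le := nonneg_sym_eigenvalue_norm_le Bsym B_ge0 le_eig eig_a.
apply: le_trans (ler_norm _) _; rewrite normrX.
by apply: lerXn2r; rewrite ?nnegrE // (le_trans _ a_le).
Qed.

End RealSymmetricSpectrum.

Section RowFun.
Variables (R : pzRingType) (T : finType) (A : {set T}).

Definition row_of_fun (F : T -> R) : 'rV[R]_#|A| := \row_i F (enum_val i).

Definition fun_of_row (y : 'rV[R]_#|A|) (u : T) : R :=
  if [pick i | enum_val i == u] is Some i then y 0 i else 0.

Lemma fun_of_rowK : cancel fun_of_row row_of_fun.
Proof.
move=> y; apply/rowP => i; rewrite mxE /fun_of_row.
by case: pickP => [j /eqP/enum_val_inj -> //|/(_ i)]; rewrite eqxx.
Qed.

Lemma fun_of_row_out y u : u \notin A -> fun_of_row y u = 0.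
Proof.
move=> uA; rewrite /fun_of_row; case: pickP => // i /eqP ei.
by rewrite -ei enum_valP in uA.
Qed.

Lemma form_row_of_fun F :
  (row_of_fun F *m (row_of_fun F)^T) 0 0 = \sum_(u in A) F u ^+ 2.
Proof. by rewrite mxE [RHS]big_enum_val; apply: eq_bigr => i _; rewrite !mxE expr2. Qed.

End RowFun.

Section AdjacencyWalks.
Variables (R : realType) (T : finType) (e : rel T).

Lemma adj_mxX (A : {set T}) k i j :
  (adj_mx R e A ^+ k) i j = (nwalks e A k (enum_val i) (enum_val j))%:R.
Proof.
elim: k i j => [|k IHk] i j; first by rewrite expr0 mxE /= (inj_eq enum_val_inj).
rewrite exprS -mulmxE mxE /= natr_sum big_mkcondr /= [RHS]big_enum_val.
by apply: eq_bigr => l _; rewrite IHk mxE; case: (e _ _); rewrite ?mul1r ?mul0r.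
Qed.

Definition walk_form (A : {set T}) k (F : T -> R) : R :=
  \sum_(u in A) \sum_(v in A) F u * (nwalks e A k u v)%:R * F v.

Lemma adj_formX (A : {set T}) k F :
  (row_of_fun A F *m adj_mx R e A ^+ k *m (row_of_fun A F)^T) 0 0 = walk_form A k F.
Proof.
rewrite mxE /walk_form [RHS]big_enum_val.
under [RHS]eq_bigr do rewrite big_enum_val.
rewrite exchange_big; apply: eq_bigr => j _; rewrite !mxE mulr_suml.
by apply: eq_bigr => i _; rewrite !mxE adj_mxX.
Qed.

Lemma walk_form_escape (A : {set T}) k F : (forall u, 0 <= F u) ->
  (forall u, u \in A -> nwalks e A k u u < nwalks e setT k u u)%N ->
  walk_form A k F + \sum_(u in A) F u ^+ 2 <= walk_form setT k F.
Proof.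
move=> F_ge0 escape.
have term_ge0 B u v : 0 <= F u * (nwalks e B k u v)%:R * F v by rewrite !mulr_ge0.
pose WT u v := F u * (nwalks e setT k u v)%:R * F v.
apply: (@le_trans _ _ (\sum_(u in A) \sum_(v in A) WT u v)).
  rewrite /walk_form -big_split /=; apply: ler_sum => u uA.
  rewrite (bigD1 u uA) [X in _ <= X](bigD1 u uA) /= addrAC lerD //.
    have -> : forall a b : R, a * b * a + a ^+ 2 = a * (b + 1) * a.
      by move=> a b; rewrite mulrDr mulr1 mulrDl expr2.
    rewrite ler_wpM2r ?ler_wpM2l //.
    by rewrite natr1 ler_nat; apply: escape.
  by apply: ler_sum => v _; rewrite ler_wpM2r ?ler_wpM2l // ler_nat subset_nwalks ?subsetT.
apply: (@le_trans _ _ (\sum_(u in A) \sum_(v in setT) WT u v)).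
  by apply: ler_sum => u _; apply/ler_psum_sub => // v _; apply: term_ge0.
apply/ler_psum_sub => // u _; apply: sumr_ge0 => v _; apply: term_ge0.
Qed.

End AdjacencyWalks.

Theorem lemma6 (R : realType) (T : finType) (e : rel T) (r : nat)
    (S : {set T}) (lG lH : R) :
  simple_graph e -> (0 < r)%N -> is_rnet e r S ->
  (0 < #|~: S|)%N ->
  is_lambda1 (adj_mx R e [set: T]) lG ->
  is_lambda1 (adj_mx R e (~: S)) lH ->
  lH ^+ (2 * r) <= lG ^+ (2 * r) - 1.
Proof.
move=> [e_sym _] _ rnet _ [_ lG_max] [eig_lH _].
have [y yH y0] := eigenvalueP eig_lH.
pose F := fun_of_row (map_mx Num.norm y).
have F_ge0 u : 0 <= F u.
  by rewrite /F /fun_of_row; case: pickP => // i _; rewrite mxE normr_ge0.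
have FH : row_of_fun (~: S) F = map_mx Num.norm y := fun_of_rowK _.
have normF : \sum_(u in ~: S) F u ^+ 2 = (y *m y^T) 0 0.
  by rewrite -form_row_of_fun FH form_norm.
have normFT : \sum_(u in [set: T]) F u ^+ 2 = (y *m y^T) 0 0.
  rewrite (big_setID (~: S)) /= setTI normF big1 ?addr0 // => u.
  by rewrite inE => /andP[uS _]; rewrite /F fun_of_row_out ?expr0n.
have lower : lH ^+ (2 * r) * (y *m y^T) 0 0 <= walk_form e (~: S) (2 * r) F.
  by rewrite -adj_formX FH; apply: eigenvector_formX_le yH => i j; rewrite adj_mxX ler0n.
have upper : walk_form e setT (2 * r) F <= lG ^+ (2 * r) * (y *m y^T) 0 0.
  rewrite -adj_formX -normFT -form_row_of_fun; apply: (nonneg_sym_formX2_le r _ _ lG_max).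
    by apply/matrixP => i j; rewrite !mxE e_sym.
  by move=> i j; rewrite mxE ler0n.
have escape := walk_form_escape F_ge0 (fun u => rnet_nwalks_escape e_sym (u := u) rnet).
rewrite lerBrDr -(ler_pM2r (form_gt0 y0)) mulrDl mul1r.
apply: (le_trans _ upper); apply: (le_trans _ escape).
by rewrite normF lerD2r.
Qed.
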